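(* The sequence $\left(\frac{H(n)}{\log n}\right)_{n=2}^\infty$ is $\mathcal I_{<1}$-convergent to $0$; that is, for every $\varepsilon>0$ the set $\{n\ge2:\frac{H(n)}{\log n}\ge\varepsilon\}$ has convergence exponent strictly less than $1$.
   Context: $\mathbb N$ denotes the set of positive integers. For $n>1$ with canonical factorization $n=p_1^{\alpha_1}\cdots p_k^{\alpha_k}$ (distinct primes $p_j$, $\alpha_j\ge1$), $H(n)=\max_{1\le j\le k}\alpha_j$. For $A\subset\mathbb N$ the convergence exponent is $\lambda(A)=\inf\{t>0:\sum_{a\in A}a^{-t}<\infty\}$, and $\mathcal I_{<1}=\{A\subset\mathbb N:\lambda(A)<1\}$. A sequence $(x_n)$ is $\mathcal I$-convergent to $L$ if for every $\varepsilon>0$ the set $\{n:|x_n-L|\ge\varepsilon\}$ belongs to $\mathcal I$. *)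

From mathcomp Require Import ssreflect ssrbool ssrnat fintype prime bigop.

(* H n = max_j alpha_j where n = p_1^alpha_1 ... p_k^alpha_k (n > 1).
   logn p n is the exponent of p in n (0 if p does not divide n). *)
Definition H (n : nat) : nat := (\max_(p < n.+1 | prime p) logn p n)%N.

From Stdlib Require Import Reals ClassicalEpsilon.
Local Open Scope R_scope.

Definition ind (P : Prop) : R :=
  if excluded_middle_informative P then 1 else 0.

(* partial sums  sum_{a in A, 1 <= a <= N+1} a^(-t) ; A is a subset of the
   positive integers (the value 0 is never summed). *)
Definition partial_sum (A : nat -> Prop) (t : R) (N : nat) : R :=
  sum_f_R0 (fun k => ind (A (S k)) * Rpower (INR (S k)) (- t)) N.

Definition summable_exp (A : nat -> Prop) (t : R) : Prop :=
  exists l : R, Un_cv (partial_sum A t) l.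

Definition exp_set (A : nat -> Prop) (t : R) : Prop :=
  0 < t /\ summable_exp A t.

Definition is_lower_bound (E : R -> Prop) (m : R) : Prop :=
  forall x, E x -> m <= x.

Definition is_glb (E : R -> Prop) (m : R) : Prop :=
  is_lower_bound E m /\ (forall b, is_lower_bound E b -> b <= m).

Definition in_I_lt1 (A : nat -> Prop) : Prop :=
  exists lam : R, is_glb (exp_set A) lam /\ lam < 1.

Definition I_lt1_converges_from (n0 : nat) (x : nat -> R) (L : R) : Prop :=
  forall eps : R, 0 < eps ->
    in_I_lt1 (fun n => (n0 <= n)%nat /\ Rabs (x n - L) >= eps).

From Stdlib Require Import Reals Lra ClassicalEpsilon.
From mathcomp Require Import ssreflect ssrbool eqtype ssrnat div fintype prime bigop.
Open Scope R_scope.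

(* Fix eps > 0 and an integer B > e^(1/eps).  If n >= 2 and H(n) >= eps ln n,
   let h = H(n) and p a prime with p^h | n; then n <= e^(h/eps) <= B^h, hence
   p <= B.  So A_eps = {n >= 2 : H(n)/ln n >= eps} is covered by the blocks
   {n : d^h | n, n <= B^h} with 2 <= d <= B.  Put a = ln 2 / (2 ln B) and
   t = 1 - a.  The estimate sum_{m <= M} m^(a-1) <= (2/a) M^a bounds the t-power
   sum over one block by (2/a) B^(ah) / d^h <= (2/a) 2^(-h/2); summing this
   geometric series over h and the B values of d bounds the partial sums of
   sum_{n in A_eps} n^(-t), so that series converges with t < 1.  As the set of
   convergent exponents consists of positive reals, its infimum exists and is
   at most t < 1.
   The file develops, in order: indicators and finite sums indexed from 1; the
   power-sum estimate; power sums over multiples; the block estimate; the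
   covering of A_eps by blocks; bounded partial sums; the infimum argument. *)

Lemma ind_T (P : Prop) : P -> ind P = 1.
Proof. by move=> HP; rewrite /ind; case: excluded_middle_informative. Qed.

Lemma ind_F (P : Prop) : ~ P -> ind P = 0.
Proof. by move=> HP; rewrite /ind; case: excluded_middle_informative. Qed.

Lemma ind_ge0 (P : Prop) : 0 <= ind P.
Proof. rewrite /ind; case: excluded_middle_informative => ? /=; lra. Qed.

Lemma ind_mono (P P' : Prop) : (P -> P') -> ind P <= ind P'.
Proof.
move=> PP'; rewrite /ind.
by case: (excluded_middle_informative P); case: (excluded_middle_informative P');
  move=> /= ? ?; try lra; tauto.
Qed.

Lemma exp_le_mono x y : x <= y -> exp x <= exp y.
Proof. by case=> [/exp_increasing|->]; lra. Qed.

Lemma ln_le_mono x y : 0 < x -> x <= y -> ln x <= ln y.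
Proof. by move=> x0; case=> [/(ln_increasing _ _ x0)|->]; lra. Qed.

Lemma exp_mul_nat (h : nat) c : exp (INR h * c) = exp c ^ h.
Proof.
elim: h => [|h IH]; first by rewrite Rmult_0_l exp_0.
by rewrite S_INR /= -IH -exp_plus; f_equal; ring.
Qed.

Lemma INR_expn d h : INR (expn d h) = INR d ^ h.
Proof. by elim: h => [|h IH] //; rewrite expnS mult_INR IH. Qed.

Lemma INR_pos (n : nat) : (0 < n)%nat -> 0 < INR n.
Proof. by move=> n0; apply: lt_0_INR; apply/ltP. Qed.

Fixpoint sum1 (f : nat -> R) (N : nat) : R :=
  match N with O => 0 | S N' => sum1 f N' + f (S N') end.

Lemma sum1S (f : nat -> R) N : sum1 f N.+1 = sum1 f N + f N.+1.
Proof. by []. Qed.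

Lemma sum1_shift (f : nat -> R) N : sum_f_R0 (fun k => f (S k)) N = sum1 f (S N).
Proof. by elim: N => [|N IH] /=; [ring | rewrite IH]. Qed.

Lemma sum1_le (f g : nat -> R) N :
  (forall n, (1 <= n <= N)%nat -> f n <= g n) -> sum1 f N <= sum1 g N.
Proof.
elim: N => [|N IH] fg /=; first lra.
have := fg N.+1 (leqnn _); have : sum1 f N <= sum1 g N; last lra.
by apply: IH => n /andP[n1 nN]; apply: fg; rewrite n1 (leqW nN).
Qed.

Lemma sum1_zero N : sum1 (fun _ => 0) N = 0.
Proof. by elim: N => [|N IH] //=; rewrite IH; ring. Qed.

Lemma sum1_mono (f : nat -> R) N N' :
  (forall n, 0 <= f n) -> (N <= N')%nat -> sum1 f N <= sum1 f N'.
Proof.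
move=> f0 NN'; rewrite -(subnKC NN').
elim: (N' - N)%nat => [|k IH]; first by rewrite addn0; lra.
by rewrite addnS /=; have := f0 (N + k).+1; lra.
Qed.

Lemma sum1_exchange (f : nat -> nat -> R) K N :
  sum1 (fun n => sum_f_R0 (fun i => f i n) K) N = sum_f_R0 (fun i => sum1 (f i) N) K.
Proof.
elim: N => [|N IH] /=; first by rewrite sum_cte; ring.
by rewrite IH -sum_plus.
Qed.

Lemma sum_ge_term (f : nat -> R) K i :
  (forall j, 0 <= f j) -> (i <= K)%nat -> f i <= sum_f_R0 f K.
Proof.
move=> f0; elim: K => [|K IH] iK /=.
  by move: iK; rewrite leqn0 => /eqP ->; lra.
case: (leqP i K) => [/IH|Ki]; first by have := f0 K.+1; lra.
have -> : i = K.+1 by apply/eqP; rewrite eqn_leq iK Ki.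
by have := cond_pos_sum f K f0; lra.
Qed.

Lemma geom_bound c r M : 0 <= c -> 0 <= r < 1 ->
  sum_f_R0 (fun h => c * r ^ h) M <= c / (1 - r).
Proof.
move=> c0 r01.
have -> : sum_f_R0 (fun h => c * r ^ h) M = c * sum_f_R0 (fun h => r ^ h) M.
  by rewrite scal_sum; apply: PartSum.sum_eq => i _; ring.
rewrite tech3; last lra.
apply: Rmult_le_compat_l => //.
have := pow_le r M.+1 (proj1 r01).
have : 0 < / (1 - r) by apply: Rinv_0_lt_compat; lra.
rewrite /Rdiv; nra.
Qed.

Definition power_sum (t : R) (M : nat) : R := sum1 (fun m => Rpower (INR m) (- t)) M.

Lemma power_sum_mono t M M' : (M <= M')%nat -> power_sum t M <= power_sum t M'.
Proof. by apply: sum1_mono => n; left; apply: exp_pos. Qed.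

(* One step of the power-sum estimate: for 0 < a <= 1 and x >= 1,
   (2/a) x^a + (x+1)^(a-1) <= (2/a) (x+1)^a.  It follows from
   (x+1)^a >= x^a (1 + a/(x+1)), itself a consequence of 1 + u <= e^u. *)
Lemma power_sum_step a x : 0 < a <= 1 -> 1 <= x ->
  2 / a * Rpower x a + Rpower (x + 1) (a - 1) <= 2 / a * Rpower (x + 1) a.
Proof.
move=> [a0 a1] x1; set y := x + 1.
have y1 : 1 <= y by rewrite /y; lra.
have ln_gap : / y <= ln y - ln x.
  have := exp_ineq1_le (ln x - ln y).
  rewrite /Rminus exp_plus exp_Ropp !exp_ln; try lra.
  have -> : x * / y = 1 - / y by rewrite /y; field; lra.
  lra.
set X := Rpower x a; set Y := Rpower y a.
have X0 : 0 < X by apply: exp_pos.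
have Y0 : 0 < Y by apply: exp_pos.
have growth : X * (y + a) <= Y * y.
  have -> : Y = X * exp (a * (ln y - ln x)) by rewrite /X /Y /Rpower -exp_plus; f_equal; ring.
  have e_ge : 1 + a * / y <= exp (a * (ln y - ln x)).
    have := exp_ineq1_le (a * (ln y - ln x)).
    have : a * / y <= a * (ln y - ln x) by apply: Rmult_le_compat_l; lra.
    lra.
  have -> : X * (y + a) = X * (1 + a * / y) * y by field; lra.
  by apply: Rmult_le_compat_r; [lra | apply: Rmult_le_compat_l; lra].
have -> : Rpower y (a - 1) = Y * / y.
  by rewrite /Y /Rpower -{3}(exp_ln y) ?ln_exp -?exp_Ropp -?exp_plus; [f_equal; ring | lra].
apply: (Rmult_le_reg_l (a * y * (y + a))); first nra.
have -> : a * y * (y + a) * (2 / a * X + Y * / y) = 2 * y * (X * (y + a)) + a * Y * (y + a)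
  by field; lra.
have -> : a * y * (y + a) * (2 / a * Y) = 2 * y * (Y * y) + 2 * a * Y * y by field; lra.
have : 2 * y * (X * (y + a)) <= 2 * y * (Y * y) by apply: Rmult_le_compat_l; lra.
have : 0 <= a * Y * (y - a) by apply: Rmult_le_pos; nra.
lra.
Qed.

Lemma power_sum_bound a M : 0 < a <= 1 ->
  power_sum (1 - a) (S M) <= 2 / a * Rpower (INR (S M)) a.
Proof.
move=> a01; rewrite /power_sum; elim: M => [|M IH].
  rewrite /= Rplus_0_l /Rpower ln_1 !Rmult_0_r exp_0.
  have : 1 <= 2 / a; last lra.
  apply: (Rmult_le_reg_l a); first lra.
  by rewrite Rmult_1_r (_ : a * (2 / a) = 2); [lra | field; lra].
have step := @power_sum_step a _ a01 (le_INR 1 M.+1 (leP (ltn0Sn M))).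
rewrite -S_INR in step.
change (sum1 (fun m => Rpower (INR m) (- (1 - a))) M.+1 + Rpower (INR M.+2) (- (1 - a))
  <= 2 / a * Rpower (INR M.+2) a).
rewrite (_ : Rpower (INR M.+2) (- (1 - a)) = Rpower (INR M.+2) (a - 1)); last by f_equal; ring.
lra.
Qed.

Lemma multiples_sum t (q X : nat) N : (0 < q)%nat ->
  sum1 (fun n => ind ((q %| n) /\ (n <= X)%nat) * Rpower (INR n) (- t)) N
  = Rpower (INR q) (- t) * power_sum t (minn N X %/ q).
Proof.
move=> q0; elim: N => [|N IH]; first by rewrite min0n div0n /power_sum /=; ring.
rewrite sum1S IH.
case: (leqP N.+1 X) => [NX | XN]; last first.
  by rewrite (minn_idPr (XN : X <= N)%N) ind_F; [ring | case].
rewrite (minn_idPl (ltnW NX)) (divnS _ q0).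
case qN: (q %| N.+1); last first.
  by rewrite ind_F ?add0n; [ring | case].
rewrite ind_T // add1n.
have NSq : INR N.+1 = INR q * INR (N %/ q).+1.
  have -> : (N %/ q).+1 = N.+1 %/ q by rewrite (divnS _ q0) qN.
  rewrite -mult_INR; congr INR; symmetry.
  by change (q * (N.+1 %/ q) = N.+1)%N; rewrite mulnC divnK.
rewrite /power_sum sum1S NSq -Rpower_mult_distr; [ring | exact: INR_pos | exact: INR_pos].
Qed.

Lemma multiples_sum_bound a (q X : nat) N : 0 < a <= 1 -> (0 < q)%nat ->
  sum1 (fun n => ind ((q %| n) /\ (n <= X)%nat) * Rpower (INR n) (- (1 - a))) N
  <= 2 / a * (Rpower (INR X) a / INR q).
Proof.
move=> a01 q0; rewrite multiples_sum //.
have qR : 0 < INR q by exact: INR_pos.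
have w0 : 0 < Rpower (INR q) (- (1 - a)) by apply: exp_pos.
have bound0 : 0 < 2 / a * (Rpower (INR X) a / INR q).
  apply: Rmult_lt_0_compat; first by apply: Rdiv_lt_0_compat; lra.
  by apply: Rdiv_lt_0_compat => //; apply: exp_pos.
have := @power_sum_mono (1 - a) _ _ (leq_div2r q (geq_minr N X)).
case XM: (X %/ q) => [|M] mono.
  by rewrite (_ : power_sum (1 - a) 0 = 0) in mono; [nra|].
have XqM : INR M.+1 <= INR X / INR q.
  rewrite -XM; apply: (Rmult_le_reg_r (INR q)) => //.
  rewrite /Rdiv Rmult_assoc Rinv_l ?Rmult_1_r -?mult_INR; last lra.
  by apply: le_INR; apply/leP; apply: leq_divM.
have M_bound : power_sum (1 - a) M.+1 <= 2 / a * Rpower (INR X / INR q) a.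
  apply: Rle_trans (@power_sum_bound a M a01) _.
  apply: Rmult_le_compat_l; first by left; apply: Rdiv_lt_0_compat; lra.
  by apply: Rle_Rpower_l; [lra | split; [apply: INR_pos |]].
have X0 : 0 < INR X.
  by apply: INR_pos; rewrite lt0n; apply/eqP => X0; rewrite X0 div0n in XM.
have scale : Rpower (INR q) (- (1 - a)) * Rpower (INR X / INR q) a = Rpower (INR X) a / INR q.
  rewrite /Rpower /Rdiv ln_mult ?ln_Rinv; try by [|apply: Rinv_0_lt_compat].
  rewrite -{3}(exp_ln (INR q)) // -exp_Ropp -!exp_plus; f_equal; ring.
rewrite -scale.
have := Rmult_le_compat_l _ _ _ (Rlt_le _ _ w0) (Rle_trans _ _ _ mono M_bound).
lra.
Qed.

Definition in_block (B d h n : nat) : Prop :=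
  (2 <= d)%nat /\ (expn d h %| n)%nat /\ (n <= expn B h)%nat.

(* Block estimate: if a ln B = ln 2 / 2, the (1-a)-power sum over a block is
   at most (2/a) B^(ah) / d^h <= (2/a) (2^(-1/2))^h. *)
Lemma block_sum_bound B a d h N : (0 < B)%nat -> 0 < a <= 1 -> a * ln (INR B) = ln 2 / 2 ->
  sum1 (fun n => ind (in_block B d h n) * Rpower (INR n) (- (1 - a))) N
  <= 2 / a * exp (- (ln 2 / 2)) ^ h.
Proof.
move=> B0 a01 aB.
have bound0 : 0 <= 2 / a * exp (- (ln 2 / 2)) ^ h.
  apply: Rmult_le_pos; first by left; apply: Rdiv_lt_0_compat; lra.
  by apply: pow_le; left; apply: exp_pos.
case: (leqP 2 d) => [d2 | d1]; last first.
  apply: Rle_trans bound0; rewrite -(sum1_zero N); apply: sum1_le => n _.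
  by rewrite ind_F ?Rmult_0_l; [lra | case; rewrite leqNgt d1].
have d0 : (0 < expn d h)%nat by rewrite expn_gt0 (leq_trans _ d2).
set multiples := fun n => (expn d h %| n)%nat /\ (n <= expn B h)%nat.
apply: (Rle_trans _ (sum1 (fun n => ind (multiples n) * Rpower (INR n) (- (1 - a))) N)).
  apply: sum1_le => n _; apply: Rmult_le_compat_r; first by left; apply: exp_pos.
  by apply: ind_mono => -[_].
apply: (Rle_trans _ _ _ (@multiples_sum_bound a _ (expn B h) N a01 d0)).
have dR : 2 <= INR d by apply: (le_INR 2); apply/leP.
apply: Rmult_le_compat_l; first by left; apply: Rdiv_lt_0_compat; lra.
have -> : Rpower (INR (expn B h)) a / INR (expn d h) = exp (INR h * (a * ln (INR B) - ln (INR d))).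
  have BR : 0 < INR B by exact: INR_pos.
  rewrite /Rpower /Rdiv !INR_expn -(exp_ln (INR d ^ h)); last by apply: pow_lt; lra.
  by rewrite -exp_Ropp -exp_plus !ln_pow; try lra; f_equal; ring.
rewrite -exp_mul_nat; apply: exp_le_mono; apply: Rmult_le_compat_l; first exact: pos_INR.
have := ln_le_mono _ _ Rlt_0_2 dR; lra.
Qed.

Definition large_H (eps : R) (n : nat) : Prop :=
  (2 <= n)%nat /\ Rabs (INR (H n) / ln (INR n) - 0) >= eps.

Lemma H_witness n : H n = 0%nat \/ exists p, prime p /\ logn p n = H n.
Proof.
apply: (big_ind (fun x => x = 0%nat \/ exists p, prime p /\ logn p n = x)) => //.
- by left.
- by move=> x y hx hy; case: (leqP x y).
- by move=> p hp; right; exists p.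
Qed.

Lemma large_H_exponent eps n : large_H eps n -> eps * ln (INR n) <= INR (H n).
Proof.
move=> [n2 ratio].
have lnn : 0 < ln (INR n).
  by rewrite -ln_1; apply: ln_increasing; [lra | apply: (lt_INR 1); apply/ltP].
rewrite Rminus_0_r Rabs_pos_eq in ratio; last first.
  by apply: Rmult_le_pos; [apply: pos_INR | left; apply: Rinv_0_lt_compat].
have := Rmult_le_compat_r _ _ _ (Rlt_le _ _ lnn) (Rge_le _ _ ratio).
by rewrite /Rdiv Rmult_assoc Rinv_l ?Rmult_1_r; lra.
Qed.

(* Covering: if B > e^(1/eps), every n in A_eps with n <= M lies in a block
   (B, d, h) with d <= B and h <= M: take h = H n and d a prime with d^h | n. *)
Lemma large_H_in_block eps B n M : 0 < eps -> exp (1 / eps) < INR B ->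
  large_H eps n -> (n <= M)%nat ->
  exists d h, (d <= B)%nat /\ (h <= M)%nat /\ in_block B d h n.
Proof.
move=> eps0 expB An nM.
have n2 := proj1 An; have Hn := @large_H_exponent eps n An.
have n1 : 1 < INR n by apply: (lt_INR 1); apply/ltP.
have lnn : 0 < ln (INR n) by rewrite -ln_1; apply: ln_increasing; lra.
case: (H_witness n) => [H0 | [p [p_pr logp]]].
  by rewrite H0 /= in Hn; nra.
set h := H n in Hn logp.
have ph_n : (expn p h %| n)%nat by rewrite -logp pfactor_dvdnn.
have ph_le_n : (expn p h <= n)%nat by apply: dvdn_leq => //; apply: ltnW.
have n_le_Bh : (n <= expn B h)%nat.
  have lnn_h : ln (INR n) <= INR h * (1 / eps).
    apply: (Rmult_le_reg_l eps) => //.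
    by rewrite (_ : eps * (INR h * (1 / eps)) = INR h); [lra | field; lra].
  apply/leP/INR_le; rewrite INR_expn -(exp_ln (INR n)); last lra.
  apply: (Rle_trans _ _ _ (@exp_le_mono _ _ lnn_h)).
  by rewrite exp_mul_nat; apply: pow_incr; split; [left; apply: exp_pos | lra].
have h0 : (0 < h)%nat.
  by rewrite lt0n; apply/eqP => h0; rewrite h0 /= in Hn; nra.
exists p, h; split; last split.
- rewrite leqNgt; apply/negP => Bp.
  have : (expn B h < expn p h)%nat by rewrite ltn_exp2r.
  by rewrite ltnNge (leq_trans ph_le_n n_le_Bh).
- apply: ltnW; apply: leq_trans (ltn_expl h (prime_gt1 p_pr)) _.
  exact: leq_trans ph_le_n nM.
- by split; [apply: prime_gt1 | split].
Qed.

Lemma large_H_term_le_blocks eps B t n M : 0 < eps -> exp (1 / eps) < INR B ->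
  (n <= M)%nat ->
  ind (large_H eps n) * Rpower (INR n) (- t)
  <= sum_f_R0 (fun d => sum_f_R0 (fun h => ind (in_block B d h n) * Rpower (INR n) (- t)) M) B.
Proof.
move=> eps0 expB nM.
have term0 : forall P : Prop, 0 <= ind P * Rpower (INR n) (- t).
  by move=> P; apply: Rmult_le_pos; [apply: ind_ge0 | left; apply: exp_pos].
case: (excluded_middle_informative (large_H eps n)) => An; last first.
  by rewrite ind_F // Rmult_0_l; apply: cond_pos_sum => d; apply: cond_pos_sum.
have [d [h [dB [hM blk]]]] := @large_H_in_block eps B n M eps0 expB An nM.
rewrite ind_T //.
apply: Rle_trans (@sum_ge_term _ B d (fun d => cond_pos_sum _ M (fun h => term0 _)) dB).
apply: Rle_trans (@sum_ge_term _ M h (fun h => term0 _) hM).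
by rewrite ind_T //; lra.
Qed.

Lemma large_H_partial_sums_bounded eps B a N :
  0 < eps -> exp (1 / eps) < INR B -> (0 < B)%nat ->
  0 < a <= 1 -> a * ln (INR B) = ln 2 / 2 ->
  partial_sum (large_H eps) (1 - a) N
  <= INR (S B) * (2 / a / (1 - exp (- (ln 2 / 2)))).
Proof.
move=> eps0 expB B0 a01 aB.
set r := exp (- (ln 2 / 2)).
have r01 : 0 <= r < 1.
  by split; [left; apply: exp_pos | rewrite /r -exp_0; apply: exp_increasing; have := ln_lt_2; lra].
set w := fun (P : nat -> Prop) n => ind (P n) * Rpower (INR n) (- (1 - a)).
rewrite /partial_sum (sum1_shift (w (large_H eps))).
apply: (Rle_trans _ (sum1 (fun n => sum_f_R0 (fun d => sum_f_R0 (fun h =>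
          w (in_block B d h) n) N.+1) B) N.+1)).
  by apply: sum1_le => n /andP[_ nN]; apply: large_H_term_le_blocks.
rewrite sum1_exchange -[X in _ <= X]Rmult_comm -sum_cte.
apply: sum_Rle => d _; rewrite sum1_exchange.
have c0 : 0 <= 2 / a by left; apply: Rdiv_lt_0_compat; lra.
apply: Rle_trans (@geom_bound (2 / a) r N.+1 c0 r01).
by apply: sum_Rle => h _; apply: block_sum_bound.
Qed.

Lemma summable_of_bounded (A : nat -> Prop) t C :
  (forall N, partial_sum A t N <= C) -> summable_exp A t.
Proof.
move=> bounded.
have growing : Un_growing (partial_sum A t).
  move=> N; rewrite /partial_sum tech5.
  have := ind_ge0 (A N.+2); have := exp_pos (- t * ln (INR N.+2)).
  rewrite /Rpower; nra.
have upper : has_ub (partial_sum A t) by exists C => _ [N ->].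
have [l cv] := growing_cv _ growing upper.
by exists l.
Qed.

Lemma large_H_summable eps : 0 < eps ->
  exists t, 0 < t < 1 /\ summable_exp (large_H eps) t.
Proof.
move=> eps0.
have [B expB] := INR_unbounded (exp (1 / eps)).
have exp_gt1 : 1 < exp (1 / eps).
  by rewrite -[X in X < _]exp_0; apply: exp_increasing; apply: Rdiv_lt_0_compat; lra.
have B2 : (2 <= B)%nat by rewrite leqNgt ltnS; apply/negP => /leP/le_INR /=; lra.
have B2R : 2 <= INR B by apply: (le_INR 2); apply/leP.
have ln2 := ln_lt_2.
have lnB : ln 2 <= ln (INR B) by apply: ln_le_mono; lra.
set a := ln 2 / (2 * ln (INR B)).
have aB : a * ln (INR B) = ln 2 / 2 by rewrite /a; field; lra.
have a0 : 0 < a by apply: Rdiv_lt_0_compat; lra.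
have a_half : a <= 1 / 2.
  by apply: (Rmult_le_reg_r (ln (INR B))); [lra | rewrite aB; lra].
exists (1 - a); split; first lra.
apply: summable_of_bounded => N.
by apply: (@large_H_partial_sums_bounded eps B a N) => //; [exact: ltnW | lra].
Qed.

Lemma glb_of_positive_set (E : R -> Prop) t :
  (forall x, E x -> 0 < x) -> E t -> exists m, is_glb E m /\ m <= t.
Proof.
move=> pos Et.
set F := fun x => E (- x).
have F_bounded : bound F by exists 0 => x /pos; lra.
have F_ne : exists x, F x by exists (- t); rewrite /F Ropp_involutive.
have [m [ub least]] := completeness F F_bounded F_ne.
have lower : is_lower_bound E (- m).
  move=> x Ex; suff : - x <= m by lra.
  by apply: ub; rewrite /F Ropp_involutive.
exists (- m); split; last exact: lower.
split => // b b_lower.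
suff : m <= - b by lra.
by apply: least => y /b_lower; lra.
Qed.

Theorem theorem7 :
  I_lt1_converges_from 2 (fun n => INR (H n) / ln (INR n)) 0.
Proof.
move=> eps eps0.
have [t [[t0 t1] summable]] := @large_H_summable eps eps0.
have [m [glb mt]] := @glb_of_positive_set (exp_set (large_H eps)) t
  (fun x Ex => proj1 Ex) (conj t0 summable).
by exists m; split; [exact: glb | lra].
Qed.
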